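(* Let $\mathcal{M}$, $\mathcal{Z}$, $\mathcal{T}$ be finite sets with $|\mathcal{T}|\ge 2$. Let $\mathcal{F}$ be a family of hash functions from $\mathcal{M}$ to $\mathcal{Z}$, let $\mathcal{H}$ be an SU$_2$ family of hash functions from $\mathcal{Z}$ to $\mathcal{T}$, and let $\mathcal{G}:=\mathcal{H}\circ\mathcal{F}$ be their element-wise composition. Let $\epsilon'\ge 0$ and $\epsilon=\epsilon'(1-1/|\mathcal{T}|)+1/|\mathcal{T}|$. Then $\mathcal{G}$ is $\epsilon$-ASU$_2$ if and only if $\mathcal{F}$ is $\epsilon'$-AU$_2$.
   Context: Hash function families are finite families (multisets indexed by keys) of functions. Element-wise composition: $\mathcal{H}\circ\mathcal{F}$ is the family $(h\circ f)_{(h,f)\in\mathcal{H}\times\mathcal{F}}$, so $|\mathcal{G}|=|\mathcal{H}||\mathcal{F}|$, counted with multiplicity. A family $\mathcal{F}$ of functions $\mathcal{M}\to\mathcal{Z}$ is $\epsilon'$-Almost Universal$_2$ ($\epsilon'$-AU$_2$) if for any two distinct $m_1,m_2\in\mathcal{M}$, the number of $f\in\mathcal{F}$ with $f(m_1)=f(m_2)$ is at most $\epsilon'|\mathcal{F}|$. A family $\mathcal{G}$ of functions $\mathcal{M}\to\mathcal{T}$ is $\epsilon$-Almost Strongly Universal$_2$ ($\epsilon$-ASU$_2$) if (a) for every $m_1\in\mathcal{M}$ and $t_1\in\mathcal{T}$, the number of $g\in\mathcal{G}$ with $g(m_1)=t_1$ is exactly $|\mathcal{G}|/|\mathcal{T}|$;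 and (b) for all distinct $m_1,m_2\in\mathcal{M}$ and all $t_1,t_2\in\mathcal{T}$ (possibly equal), among those $g$ with $g(m_1)=t_1$, the fraction that also satisfy $g(m_2)=t_2$ is at most $\epsilon$, i.e. $|\{g: g(m_1)=t_1, g(m_2)=t_2\}|\le \epsilon|\mathcal{G}|/|\mathcal{T}|$. The family is Strongly Universal$_2$ (SU$_2$) if it is $\epsilon$-ASU$_2$ with $\epsilon=1/|\mathcal{T}|$. *)

From HB Require Import structures.
From mathcomp Require Import all_boot all_order all_algebra.
Set Implicit Arguments. Unset Strict Implicit. Unset Printing Implicit Defensive.
Import Order.TTheory GRing.Theory Num.Theory.
Local Open Scope ring_scope.

(* A hash family from M to Z is a finite family indexed by a finite key type K
   (multiset, counted with multiplicity): F : K -> M -> Z, with |F| = #|K|. *)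

Definition hcomp (KH KF : finType) (M Z T : Type)
  (H : KH -> Z -> T) (F : KF -> M -> Z) : KH * KF -> M -> T :=
  fun k m => H k.1 (F k.2 m).

Definition AU2 (R : realFieldType) (K M Z : finType) (F : K -> M -> Z) (e : R) : Prop :=
  forall m1 m2 : M, m1 != m2 ->
    (#|[set k : K | F k m1 == F k m2]|%:R : R) <= e * #|K|%:R.

Definition ASU2 (R : realFieldType) (K M T : finType) (G : K -> M -> T) (e : R) : Prop :=
  (forall (m1 : M) (t1 : T),
     (#|[set k : K | G k m1 == t1]|%:R : R) = #|K|%:R / #|T|%:R) /\
  (forall (m1 m2 : M) (t1 t2 : T), m1 != m2 ->
     (#|[set k : K | (G k m1 == t1) && (G k m2 == t2)]|%:R : R)
       <= e * #|K|%:R / #|T|%:R).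

Definition SU2 (R : realFieldType) (K M T : finType) (G : K -> M -> T) : Prop :=
  ASU2 G ((#|T|%:R : R)^-1).

From HB Require Import structures.
From mathcomp Require Import all_boot all_order all_algebra ring.
Import Order.TTheory GRing.Theory Num.Theory.
Local Open Scope ring_scope.
Set Implicit Arguments. Unset Strict Implicit.

(* Write n = |T|, kh = |H|, kf = |F| and D = kh/n - kh/n^2 > 0.
   1. Since H is SU_2, for two distinct inputs z1 != z2 every pair of tags
      (t1, t2) is hit by exactly kh/n^2 keys of H (the bound 1/n on each of
      the n conditional fractions must be tight, because they sum to one);
      for z1 = z2 the pair (t, t) is hit by kh/n keys and (t1, t2) with
      t1 != t2 by none.
   2. Counting the keys (h, f) of G = H o F by first fixing f, the number of
      keys with g m1 = t = g m2 equals kf kh/n^2 + c D, where c is the number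
      of collisions f m1 = f m2 in F; off the diagonal (t1 != t2) the count
      is at most kf kh/n^2, and every single tag is hit by |G|/n keys.
   3. With eps = e'(1 - 1/n) + 1/n one has eps |G|/n = kf kh/n^2 + e' kf D,
      so the diagonal ASU_2 bound is equivalent to c <= e' kf, which is the
      AU_2 bound; the off-diagonal bounds and uniformity hold for free. *)

Lemma card_set_indicator (I : finType) (P : pred I) :
  #|[set x | P x]| = (\sum_x (P x : nat))%N.
Proof. by rewrite -sum1dep_card big_mkcond; apply: eq_bigr => x _; case: (P x). Qed.

Lemma card_set_pair (A B : finType) (P : A * B -> bool) :
  #|[set k | P k]| = (\sum_(b : B) #|[set a | P (a, b)]|)%N.
Proof.
rewrite card_set_indicator.
under [RHS]eq_bigr => b _ do rewrite card_set_indicator.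
by rewrite exchange_big pair_big /=; apply: eq_bigr => -[a b].
Qed.

Lemma card_set_fibers (I J : finType) (P : pred I) (g : I -> J) :
  #|[set x | P x]| = (\sum_(j : J) #|[set x | P x && (g x == j)]|)%N.
Proof.
rewrite -sum1dep_card (partition_big g xpredT) //=.
by apply: eq_bigr => j _; rewrite sum1dep_card.
Qed.

Lemma sum_eq_bound (R : realDomainType) (J : finType) (x : J -> R) (c : R) :
  (forall j, x j <= c) -> \sum_j x j = \sum_(j : J) c -> forall j, x j = c.
Proof.
move=> x_le sum_eq j; apply/eqP; rewrite eq_le x_le /=.
move: sum_eq; rewrite (bigD1 j) // [in RHS](bigD1 j) //= => sum_eq.
have rest_le : \sum_(i | i != j) x i <= \sum_(i | i != j) c by exact: ler_sum.
by rewrite -(lerD2r (\sum_(i | i != j) x i)) sum_eq lerD2l.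
Qed.

Section StronglyUniversal.

Variables (R : realFieldType) (Z T KH : finType) (H : KH -> Z -> T).
Hypothesis T_ge2 : (2 <= #|T|)%N.
Hypothesis H_SU2 : SU2 R H.

Let n : R := #|T|%:R.
Let kh : R := #|KH|%:R.

Lemma card_T_neq0 : n != 0.
Proof. by rewrite /n pnatr_eq0 -lt0n; apply: leq_trans T_ge2. Qed.

Lemma su2_tag_count z t : (#|[set h | H h z == t]|%:R : R) = kh / n.
Proof. by case: H_SU2 => uniform _; exact: uniform. Qed.

Lemma su2_pair_count_neq z1 z2 t1 t2 : z1 != z2 ->
  (#|[set h | (H h z1 == t1) && (H h z2 == t2)]|%:R : R) = kh / n / n.
Proof.
move=> z12; case: H_SU2 => _ pair_le.
pose x t := (#|[set h | (H h z1 == t1) && (H h z2 == t)]|%:R : R).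
apply: (@sum_eq_bound R T x) => [t|].
  by rewrite /x (mulrC kh); exact: pair_le.
rewrite /x -natr_sum -card_set_fibers su2_tag_count sumr_const -/n.
by rewrite -mulr_natr; field; exact: card_T_neq0.
Qed.

Lemma su2_pair_count z1 z2 t1 t2 :
  (#|[set h | (H h z1 == t1) && (H h z2 == t2)]|%:R : R) =
  if z1 == z2 then (if t1 == t2 then kh / n else 0) else kh / n / n.
Proof.
have [<-|z12] := eqVneq z1 z2; last exact: su2_pair_count_neq.
have [<-|t12] := eqVneq t1 t2.
  by rewrite -(su2_tag_count z1 t1); congr (_%:R); apply: eq_card => h; rewrite !inE andbb.
rewrite (_ : [set h | _] = set0) ?cards0 //; apply/setP => h; rewrite !inE.
by apply/negP => /andP[/eqP -> /eqP t12_eq]; rewrite t12_eq eqxx in t12.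
Qed.

(* The gap D = kh/n - kh/n^2 between a diagonal and an off-diagonal pair
   count is positive, since n >= 2; it makes the final bound an equivalence. *)
Lemma su2_gap_gt0 : (0 < #|KH|)%N -> 0 < kh / n - kh / n / n.
Proof.
move=> KH_gt0; have n_gt1 : 1 < n by rewrite ltr1n.
have n_gt0 : 0 < n by apply: lt_trans n_gt1.
by rewrite subr_gt0 ltr_pdivrMr // divfK ?gt_eqF // ltr_pdivrMr // ltr_pMr ?ltr0n.
Qed.

End StronglyUniversal.

Definition collisions (K M Z : finType) (F : K -> M -> Z) (m1 m2 : M) : nat :=
  #|[set k | F k m1 == F k m2]|.

Section Composition.

Variables (R : realFieldType) (M Z T KF KH : finType).
Variables (F : KF -> M -> Z) (H : KH -> Z -> T).
Hypothesis T_ge2 : (2 <= #|T|)%N.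
Hypothesis H_SU2 : SU2 R H.

Let n : R := #|T|%:R.
Let kh : R := #|KH|%:R.
Let kf : R := #|KF|%:R.
Let G := hcomp H F.

Lemma card_comp : (#|{: KH * KF}|%:R : R) = kh * kf.
Proof. by rewrite card_prod natrM. Qed.

Lemma comp_pair_count m1 m2 t1 t2 :
  (#|[set k | (G k m1 == t1) && (G k m2 == t2)]|%:R : R) =
  \sum_f (#|[set h | (H h (F f m1) == t1) && (H h (F f m2) == t2)]|%:R : R).
Proof. by rewrite card_set_pair natr_sum. Qed.

Lemma comp_tag_count m t :
  (#|[set k | G k m == t]|%:R : R) = #|{: KH * KF}|%:R / n.
Proof.
rewrite card_set_pair natr_sum /G /hcomp /=.
under eq_bigr => f _ do rewrite (su2_tag_count H_SU2).
by rewrite sumr_const card_comp -mulr_natl -/kf; field; exact: card_T_neq0.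
Qed.

(* Diagonal pair count: each colliding key of F contributes kh/n instead of
   kh/n^2. *)
Lemma comp_diag_count m1 m2 t :
  (#|[set k | (G k m1 == t) && (G k m2 == t)]|%:R : R) =
  kf * (kh / n / n) + (collisions F m1 m2)%:R * (kh / n - kh / n / n).
Proof.
rewrite comp_pair_count.
under eq_bigr => f _ do rewrite (su2_pair_count T_ge2 H_SU2) eqxx.
rewrite (eq_bigr (fun f =>
    kh / n / n + ((F f m1 == F f m2) : nat)%:R * (kh / n - kh / n / n))).
  rewrite big_split /= sumr_const -mulr_suml -natr_sum -card_set_indicator.
  by rewrite [X in _ = X + _]mulr_natl.
by move=> f _; case: eqP => _ /=; ring.
Qed.

Lemma comp_offdiag_count m1 m2 t1 t2 : t1 != t2 ->
  (#|[set k | (G k m1 == t1) && (G k m2 == t2)]|%:R : R) <= kf * (kh / n / n).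
Proof.
move=> t12; rewrite comp_pair_count /kf mulr_natl -sumr_const.
apply: ler_sum => f _; rewrite (su2_pair_count T_ge2 H_SU2) (negbTE t12).
by case: eqP => // _; rewrite !divr_ge0 ?ler0n.
Qed.

Lemma asu2_bound_split (e' : R) :
  (e' * (1 - n^-1) + n^-1) * #|{: KH * KF}|%:R / n =
  kf * (kh / n / n) + (e' * kf) * (kh / n - kh / n / n).
Proof. by rewrite card_comp; field; exact: card_T_neq0. Qed.

End Composition.

Theorem theorem1 (R : realFieldType) (M Z T KF KH : finType)
  (F : KF -> M -> Z) (H : KH -> Z -> T) (e' : R)
  (hT : (2 <= #|T|)%N) (hKH : (0 < #|KH|)%N)
  (hH : SU2 R H) (he' : 0 <= e') :
  ASU2 (hcomp H F) (e' * (1 - (#|T|%:R)^-1) + (#|T|%:R)^-1)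
  <-> AU2 F e'.
Proof.
set n : R := #|T|%:R; set kh : R := #|KH|%:R; set kf : R := #|KF|%:R.
have D_gt0 : 0 < kh / n - kh / n / n := su2_gap_gt0 R hT hKH.
have diag_iff m1 m2 t :
    (#|[set k | (hcomp H F k m1 == t) && (hcomp H F k m2 == t)]|%:R
     <= (e' * (1 - n^-1) + n^-1) * #|{: KH * KF}|%:R / n)
    = ((collisions F m1 m2)%:R <= e' * kf).
  by rewrite (comp_diag_count F hT hH) (asu2_bound_split KF KH hT) lerD2l ler_pM2r.
split=> [[_ pair_le] m1 m2 m12 | F_AU2].
  have /card_gt0P[t _] : (0 < #|T|)%N by apply: leq_trans hT.
  by move: (pair_le m1 m2 t t m12); rewrite diag_iff.
split=> [m t | m1 m2 t1 t2 m12]; first exact: comp_tag_count.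
have [<-|t12] := eqVneq t1 t2; first by rewrite diag_iff; exact: F_AU2.
apply: le_trans (comp_offdiag_count F hT hH m1 m2 t12) _.
by rewrite (asu2_bound_split KF KH hT) lerDl mulr_ge0 ?mulr_ge0 ?ler0n // ltW.
Qed.
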